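(* For every $n\in\mathbb{N}$, $4^{-n}\det[D^{(1)}_{i+j}]_{0\le i,j\le n}$ is a positive odd integer.
   Context: For $m\in\mathbb{N}$, $D^{(1)}_m=\sum_{k=0}^m\binom{m}{k}\binom{2k}{k}\binom{2(m-k)}{m-k}$. $\det[a_{i+j}]_{0\le i,j\le n}$ denotes the determinant of the $(n+1)\times(n+1)$ Hankel matrix with $(i,j)$-entry $a_{i+j}$. *)

From HB Require Import structures.
From mathcomp Require Import all_boot all_order all_algebra.
Set Implicit Arguments. Unset Strict Implicit. Unset Printing Implicit Defensive.
Import Order.TTheory GRing.Theory Num.Theory.

Definition D1 (m : nat) : nat :=
  \sum_(0 <= k < m.+1) 'C(m, k) * 'C(k.*2, k) * 'C((m - k).*2, m - k).

Definition hankelD1 (n : nat) : 'M[int]_(n.+1) :=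
  \matrix_(i < n.+1, j < n.+1) Posz (D1 (i + j)).

(* Write D_m for D^{(1)}_m.  As C(2k,k) = 2 C(2k-1,k-1) for k > 0, we get
   D_{u+1} = 4 (C(2u+1,u) + E_u), where E_u collects the middle terms of the sum
   and is even since they pair up by symmetry.  So halving the rows and columns
   of positive index turns the Hankel matrix into an integer matrix M with
   det = 4^n det M.  Modulo 2, M is [1] bordered by the Hankel matrix of C(2s+1,s),
   whose parities are those of the aerated Catalan numbers ballot(i+j, 0); the
   Hankel matrix of the latter is L L^T for the unitriangular matrix L of ballot
   numbers, so det M is odd.
   Finally, expanding the binomial convolution D_{i+j} in i and j, and each central
   binomial by Vandermonde, writes the Hankel matrix as a Gram matrix U U^T where U
   has a unitriangular set of columns; it is thus positive definite, and its
   determinant is positive. *)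

From HB Require Import structures.
From mathcomp Require Import all_boot all_order all_algebra.
From mathcomp Require Import zify ring lra.
From mathcomp.real_closed Require Import realalg.
Import Order.TTheory GRing.Theory Num.Theory.

(** * Parity of binomial coefficients *)

Lemma odd_bin_double m j :
  odd 'C(m.*2, j.*2) = odd 'C(m, j) /\ ~~ odd 'C(m.*2, j.*2.+1).
Proof.
elim: m j => [|m IH] j; first by case: j.
have oddS_odd i : odd 'C(m.*2.+1, i.*2.+1) = odd 'C(m, i).
  by rewrite binS oddD (proj1 (IH i)) (negbTE (proj2 (IH i))) addFb.
have oddS_even i : odd 'C(m.*2.+1, i.*2) = odd 'C(m, i).
  case: i => [|i]; first by rewrite !bin0.
  by rewrite doubleS binS oddD (proj1 (IH i.+1)) (negbTE (proj2 (IH i))) addbF.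
split; last by rewrite !doubleS binS oddD oddS_odd oddS_even addbb.
case: j => [|j]; first by rewrite !bin0.
by rewrite !doubleS binS oddD oddS_odd (oddS_even j.+1) binS oddD addbC.
Qed.

Definition hcbin k := 'C(k.*2.+1, k).

Lemma central_binS k : 'C(k.+1.*2, k.+1) = 2 * hcbin k.
Proof.
have bin_mirror : 'C(k.*2.+1, k.+1) = 'C(k.*2.+1, k).
  by rewrite -bin_sub; [congr binomial; lia | lia].
by rewrite /hcbin doubleS binS bin_mirror addnn -mul2n.
Qed.

Lemma odd_hcb_doubleS k : odd (hcbin k.*2.+1) = odd (hcbin k).
Proof.
by rewrite /hcbin binS oddD (negbTE (proj2 (odd_bin_double _ _))) (proj1 (odd_bin_double _ _)).
Qed.

Lemma odd_hcb_doubleSS k : ~~ odd (hcbin k.*2.+2).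
Proof.
rewrite /hcbin binS oddD -doubleS (negbTE (proj2 (odd_bin_double _ _))).
by rewrite (proj1 (odd_bin_double _ _)) central_binS oddM.
Qed.

Lemma even_sum_sym w (f : nat -> nat) :
    (forall k, k <= w -> f k = f (w - k)) -> (~~ odd w -> ~~ odd (f w./2)) ->
  ~~ odd (\sum_(0 <= k < w.+1) f k).
Proof.
elim/ltn_ind: w f => -[|[|w]] IH f f_sym f_mid.
- by rewrite big_nat1; apply: f_mid.
- by rewrite big_nat_recl // big_nat1 (f_sym 0) // oddD addbb.
rewrite big_nat_recl // big_nat_recr //= (f_sym 0) // subn0.
have /= inner_even : ~~ odd (\sum_(0 <= k < w.+1) f k.+1).
  apply: IH => // [k le_kw|]; first by rewrite f_sym; [congr f; lia | lia].
  by move=> w_even; apply: f_mid; rewrite /= negbK.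
by rewrite addnCA addnn oddD odd_double (negbTE inner_even).
Qed.

Definition D1_mid u := \sum_(0 <= k < u) 'C(u.+1, k.+1) * hcbin k * hcbin (u - k.+1).

Lemma D1S u : D1 u.+1 = 4 * (hcbin u + D1_mid u).
Proof.
rewrite /D1 big_nat_recl // big_nat_recr //= bin0 subn0 binn subnn mul1n muln1.
rewrite !central_binS /D1_mid (@eq_big_nat _ _ _ 0 u _
  (fun k => 4 * ('C(u.+1, k.+1) * hcbin k * hcbin (u - k.+1)))); last first.
  move=> k /andP [_ lt_ku].
  have -> : u.+1 - k.+1 = (u - k.+1).+1 by lia.
  rewrite !central_binS; lia.
rewrite -big_distrr /= bin0; lia.
Qed.

Lemma odd_D1S_quarter u : odd (hcbin u + D1_mid u) = odd (hcbin u).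
Proof.
suff mid_even : ~~ odd (D1_mid u) by rewrite oddD (negbTE mid_even) addbF.
case: u => [|u]; first by rewrite /D1_mid big_geq.
apply: even_sum_sym => [k le_ku | u_even].
  have -> : u.+1 - (u - k).+1 = k by lia.
  rewrite -(@bin_sub u.+2 (u - k).+1); last by lia.
  have -> : u.+2 - (u - k).+1 = k.+1 by lia.
  by rewrite subSS mulnAC.
have u_double : u = u./2.*2 by rewrite -[LHS]odd_double_half (negbTE u_even).
have -> : u.+1 - (u./2).+1 = u./2 by rewrite {1 3}u_double; lia.
by rewrite {1}u_double -doubleS central_binS !oddM.
Qed.

(** * Ballot numbers *)

(* [ballot i k] counts the walks of [i] steps [+1]/[-1] from height [0] to
   height [k] that never go below [0]; [ballot (2 t) 0] is the Catalan number. *)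
Fixpoint ballot (i k : nat) : nat :=
  if i is i'.+1 then (if k is k'.+1 then ballot i' k' else 0) + ballot i' k.+1
  else k == 0.

Lemma ballotS i k : ballot i.+1 k = (if k is k'.+1 then ballot i k' else 0) + ballot i k.+1.
Proof. by []. Qed.

Lemma ballot_small i k : i < k -> ballot i k = 0.
Proof. by elim: i k => [|i IH] [|k] //= lt_ik; rewrite !IH //; lia. Qed.

Lemma ballot_diag i : ballot i i = 1.
Proof. by elim: i => [|i IH] //=; rewrite IH ballot_small. Qed.

Lemma ballot_odd_height i k : odd (i + k) -> ballot i k = 0.
Proof.
elim: i k => [|i IH] [|k] //=; rewrite ?addn0 ?addSn => odd_ik.
  by rewrite IH // addn1.
by rewrite !IH // ?addnS //= ?negbK; rewrite addnS /= negbK in odd_ik.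
Qed.

Lemma odd_ballot_double t a : odd (ballot t.*2.+1 a.*2.+1) = odd (ballot t a).
Proof.
elim: t a => [|t IH] a; first by case: a.
have two_steps k : ballot t.+1.*2.+1 k.+1 = ballot t.*2.+1 k.+1
    + (ballot t.*2.+1 k.+1 + ballot t.*2.+1 k.+3)
    + (if k is k'.+1 then ballot t.*2.+1 k' else 0).
  by rewrite doubleS; case: k => [|[|k]] /=; lia.
have oddDD x y z : odd (x + (x + y) + z) = odd (y + z).
  by rewrite !oddD addbA addbb addFb.
case: a => [|a].
  rewrite (two_steps 0) oddDD addn0 [ballot t.+1 0]ballotS add0n.
  exact: (IH 1).
rewrite [a.+1.*2]doubleS two_steps oddDD [ballot t.+1 a.+1]ballotS.
by rewrite oddD oddD addbC (IH a) (IH a.+2).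
Qed.

Lemma sum_ballot_pred K i (f : nat -> nat) : i < K ->
  \sum_(0 <= k < K) ballot i k * (if k is k'.+1 then f k' else 0) =
  \sum_(0 <= k < K) ballot i k.+1 * f k.
Proof.
case: K => [//|K] lt_iK.
by rewrite big_nat_recl // big_nat_recr //= muln0 add0n ballot_small // mul0n addn0.
Qed.

Lemma sum_ballot_shift K i j : i < K -> j < K ->
  \sum_(0 <= k < K) ballot i k * ballot j.+1 k =
  \sum_(0 <= k < K) ballot i.+1 k * ballot j k.
Proof.
move=> lt_iK lt_jK.
under eq_bigr do rewrite ballotS mulnDr.
under [RHS]eq_bigr do rewrite ballotS mulnDl.
rewrite !big_split /= sum_ballot_pred // addnC; congr addn.
under [RHS]eq_bigr do rewrite mulnC.
rewrite sum_ballot_pred //.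
by apply: eq_bigr => k _; rewrite mulnC.
Qed.

Lemma sum_ballot_trunc K K' i (f : nat -> nat) : i < K -> i < K' ->
  \sum_(0 <= k < K) ballot i k * f k = \sum_(0 <= k < K') ballot i k * f k.
Proof.
suff trunc L : i < L -> \sum_(0 <= k < L) ballot i k * f k =
    \sum_(0 <= k < i.+1) ballot i k * f k by move=> /trunc -> /trunc ->.
move=> lt_iL; rewrite (big_cat_nat _ (n := i.+1)) //= [X in _ + X]big1_seq ?addn0 //.
by move=> k /andP [_]; rewrite mem_index_iota => /andP [lt_ik _]; rewrite ballot_small.
Qed.

Lemma sum_ballot_mul K i j : i < K ->
  \sum_(0 <= k < K) ballot i k * ballot j k = ballot (i + j) 0.
Proof.
move=> lt_iK; rewrite (sum_ballot_trunc _ (i + j).+1) //; last by lia.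
elim: j i {K lt_iK} => [|j IH] i.
  rewrite addn0 big_nat_recl //= muln1 big1 ?addn0 // => k _.
  by rewrite muln0.
by rewrite sum_ballot_shift -?addSnnS ?IH //; lia.
Qed.

Lemma odd_hcb_ballot s : odd (hcbin s.+1) = odd (ballot s 0).
Proof.
elim/ltn_ind: s => s IH.
have := odd_double_half s; case: (odd s) => /= s_half.
  rewrite -s_half (negbTE (odd_hcb_doubleSS _)) ballot_odd_height //.
  by rewrite addn0 /= odd_double.
move: s_half IH; case: s./2 => [|t] <- IH //.
rewrite doubleS -[t.*2.+3]/(t.+1.*2.+1) odd_hcb_doubleS IH; last by lia.
by rewrite ballotS add0n (odd_ballot_double t 0).
Qed.

(** * Binomial convolutions *)

Definition binconv (c : nat -> nat) m :=
  \sum_(0 <= k < m.+1) 'C(m, k) * c k * c (m - k).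

Definition binconv_split (c : nat -> nat) i j :=
  \sum_(0 <= a < i.+1) 'C(i, a) *
    \sum_(0 <= b < j.+1) 'C(j, b) * (c (a + b) * c (i - a + (j - b))).

Lemma sum_binS i (h : nat -> nat) :
  \sum_(0 <= a < i.+2) 'C(i.+1, a) * h a = \sum_(0 <= a < i.+1) 'C(i, a) * (h a + h a.+1).
Proof.
rewrite big_nat_recl // bin0 mul1n.
under eq_bigr do rewrite binS mulnDl.
under [RHS]eq_bigr do rewrite mulnDr.
rewrite !big_split /= addnA; congr addn.
rewrite [RHS]big_nat_recl // bin0 mul1n; congr addn.
by rewrite big_nat_recr //= bin_small // mul0n addn0.
Qed.

Lemma binconv_splitS c i j : binconv_split c i.+1 j = binconv_split c i j.+1.
Proof.
rewrite /binconv_split sum_binS; apply: eq_big_nat => a /andP [_ lt_ai]; congr muln.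
rewrite sum_binS -big_split /=; apply: eq_big_nat => b /andP [_ lt_bj].
rewrite -mulnDr; congr muln.
have -> : i.+1 - a + (j - b) = i - a + (j.+1 - b) by lia.
have -> : i.+1 - a.+1 + (j - b) = i - a + (j - b) by lia.
by rewrite addSn addnS.
Qed.

Lemma binconv_splitE c i j : binconv c (i + j) = binconv_split c i j.
Proof.
elim: j i => [|j IH] i.
  rewrite /binconv_split /binconv addn0; apply: eq_big_nat => a _.
  by rewrite big_nat1 bin0 mul1n !addn0 mulnA.
by rewrite -addSnnS IH binconv_splitS.
Qed.

Local Open Scope ring_scope.

(** * Positive definite matrices *)

Lemma mulmx_tr_gt0 {R : realDomainType} {n} (v : 'rV[R]_n) :
  v != 0 -> 0 < (v *m v^T) 0 0.
Proof.
have [v0 | /forallPn [j vj_neq0]] := boolP [forall j, v 0 j == 0].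
  by case/negP; apply/eqP/rowP => j; rewrite !mxE; apply/eqP/(forallP v0).
rewrite mxE (bigD1 j) //= !mxE ltr_pwDl ?lt0r ?sqr_ge0 -?expr2 ?sqrf_eq0 ?vj_neq0 //.
by apply: sumr_ge0 => i _; rewrite mxE -expr2 sqr_ge0.
Qed.

(* Along the segment from [1] to [A] every matrix is positive definite, hence
   invertible, so its determinant, a polynomial in the parameter, keeps the sign
   of [\det 1 = 1]. *)
Lemma posdef_det_gt0 (R : rcfType) n (A : 'M[R]_n) :
  (forall v : 'rV[R]_n, v != 0 -> 0 < (v *m A *m v^T) 0 0) -> 0 < \det A.
Proof.
move=> A_posdef.
pose B (t : R) := t *: A + (1 - t) *: 1%:M.
have detB_neq0 t : 0 <= t <= 1 -> \det (B t) != 0.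
  move=> /andP [t_ge0 t_le1]; apply/negP => /det0P [v v_neq0 vB0].
  have : (v *m B t *m v^T) 0 0 = 0 by rewrite vB0 mul0mx mxE.
  rewrite /B mulmxDr -!scalemxAr mulmx1 mulmxDl -!scalemxAl !mxE.
  have := A_posdef v v_neq0; have := mulmx_tr_gt0 v v_neq0; rewrite !mxE.
  nra.
pose P : 'M[{poly R}]_n := \matrix_(i, j) (A i j *: 'X + (i == j)%:R *: (1 - 'X)).
have detP t : (\det P).[t] = \det (B t).
  rewrite -horner_evalE -det_map_mx; congr (\det _); apply/matrixP => i j.
  by rewrite !mxE /= horner_evalE !hornerE /=; ring.
have [// | detA_le0] := ltrP 0 (\det A).
have [|t t01] := @poly_ivt R (- \det P) 0 1 ler01.
  rewrite !hornerN !detP /B scale0r add0r subr0 scale1r det1 scale1r subrr.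
  by rewrite scale0r addr0 oppr_le0 oppr_ge0 ler01 detA_le0.
by rewrite /root hornerN oppr_eq0 detP (negbTE (detB_neq0 t t01)).
Qed.

Lemma gram_posdef (R : realDomainType) (T : finType) n (U : 'I_n -> T -> R)
    (col : 'I_n -> T) :
    (forall i m : 'I_n, (i < m)%N -> U i (col m) = 0) -> (forall m, U m (col m) != 0) ->
  forall v : 'rV_n, v != 0 ->
  0 < (v *m (\matrix_(i, j) \sum_t U i t * U j t) *m v^T) 0 0.
Proof.
move=> U_upper U_diag v v_neq0.
pose Umx : 'M[R]_(n, #|T|) := \matrix_(i, k) U i (enum_val k).
have -> : \matrix_(i, j) \sum_t U i t * U j t = Umx *m Umx^T.
  apply/matrixP => i j; rewrite !mxE.
  transitivity (\sum_(t in T) U i t * U j t); first exact: eq_bigl.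
  by rewrite big_enum_val; apply: eq_bigr => k _; rewrite !mxE.
rewrite mulmxA -mulmxA -trmx_mul; apply: mulmx_tr_gt0.
have [j vj_neq0] : exists j, v 0 j != 0.
  apply/existsP; apply: contraR v_neq0 => /existsPn v0.
  by apply/eqP/rowP => j; rewrite !mxE; apply/eqP/negbNE/v0.
have [m vm_neq0 m_max] := @arg_maxnP _ j (fun i => v 0 i != 0) val vj_neq0.
(* At the pivot column of the last nonzero coordinate [m] of [v], only [v 0 m]
   contributes to [v *m Umx]. *)
apply/negP => /eqP /rowP /(_ (enum_rank (col m))).
rewrite !mxE (bigD1 m) //= big1 => [|i i_neq_m]; last first.
  rewrite !mxE enum_rankK.
  have [lt_im | lt_mi | /val_inj eq_im] := ltngtP i m.
  - by rewrite U_upper // mulr0.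
  - suff -> : v 0 i = 0 by rewrite mul0r.
    by apply/eqP; apply: contraTT lt_mi => /m_max; rewrite -leqNgt.
  - by rewrite eq_im eqxx in i_neq_m.
rewrite !mxE enum_rankK addr0 => /eqP.
by rewrite mulf_eq0 (negbTE vm_neq0) (negbTE (U_diag m)).
Qed.

(** * A Gram factorization of the Hankel matrix *)

Section CentralBinomialGram.
Variable R : comNzRingType.

Lemma coef_1DX_exp m k : ((1 + 'X) ^+ m : {poly R})`_k = ('C(m, k))%:R.
Proof.
elim: m k => [|m IH] k; first by rewrite expr0 coef1; case: k.
rewrite exprSr mulrDr mulr1 coefD coefMX IH.
by case: k => [|k] /=; rewrite ?bin0 ?addr0 // IH binS natrD addrC.
Qed.

Definition cbpoly N x : {poly R} := 'X^(N - x) * (1 + 'X) ^+ x.*2.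

Lemma coef_cbpoly N x r :
  (cbpoly N x)`_r = if (r < N - x)%N then 0 else ('C(x.*2, r - (N - x)))%:R.
Proof. by rewrite /cbpoly coefXnM coef_1DX_exp. Qed.

Lemma coef_cbpoly_mirror N x r : (x <= N)%N -> (r <= N.*2)%N ->
  (cbpoly N x)`_r = (cbpoly N x)`_(N.*2 - r).
Proof.
move=> le_xN le_r2N; rewrite !coef_cbpoly.
case: ifP => lt1; case: ifP => lt2 //; try by rewrite bin_small //; lia.
have [le_x2 | lt_x2] := leqP (r - (N - x)) x.*2; last by rewrite !bin_small //; lia.
by rewrite -bin_sub //; congr (_%:R); congr binomial; lia.
Qed.

(* The coefficient of [X^(2N)] in [cbpoly N x * cbpoly N y], read through the
   palindromy of [cbpoly N y]. *)
Lemma central_bin_gram N x y : (x <= N)%N -> (y <= N)%N ->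
  ('C((x + y).*2, x + y))%:R =
  \sum_(r < N.*2.+1) (cbpoly N x)`_r * (cbpoly N y)`_r :> R.
Proof.
move=> le_xN le_yN.
have -> : ('C((x + y).*2, x + y))%:R = (cbpoly N x * cbpoly N y)`_(N.*2).
  rewrite /cbpoly mulrACA -!exprD coefXnM ifF ?coef_1DX_exp; last by apply/negbTE; lia.
  by congr (_%:R); congr binomial; lia.
rewrite coefM; apply: eq_bigr => r _.
by rewrite [in RHS](coef_cbpoly_mirror _ _ r le_yN) // -ltnS.
Qed.

End CentralBinomialGram.

Section HankelGram.
Variables (R : comNzRingType) (n : nat).

Definition hankel_factor i (p : 'I_n.*2.+1 * 'I_n.*2.+1) : R :=
  \sum_(0 <= a < i.+1) ('C(i, a))%:R * ((cbpoly R n a)`_p.1 * (cbpoly R n (i - a))`_p.2).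

Lemma hankelD1_gram i j : (i <= n)%N -> (j <= n)%N ->
  (D1 (i + j))%:R = \sum_p hankel_factor i p * hankel_factor j p.
Proof.
move=> le_in le_jn.
rewrite (eq_bigr (fun p => hankel_factor i (p.1, p.2) * hankel_factor j (p.1, p.2)));
  last by case.
rewrite -(pair_bigA _ (fun r t => hankel_factor i (r, t) * hankel_factor j (r, t))) /=.
rewrite [D1 _](binconv_splitE (fun k => 'C(k.*2, k))) /binconv_split natr_sum.
transitivity (\sum_(0 <= a < i.+1) \sum_(0 <= b < j.+1) \sum_(r < n.*2.+1)
    \sum_(t < n.*2.+1) ('C(i, a))%:R * ('C(j, b))%:R *
    ((cbpoly R n a)`_r * (cbpoly R n b)`_r *
     ((cbpoly R n (i - a))`_t * (cbpoly R n (j - b))`_t))).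
  apply: eq_big_nat => a /andP [_ lt_ai].
  rewrite natrM natr_sum big_distrr /=; apply: eq_big_nat => b /andP [_ lt_bj].
  rewrite !natrM (central_bin_gram R n) ?(central_bin_gram R n); try lia.
  rewrite mulrA mulr_suml big_distrr /=; apply: eq_bigr => r _.
  by rewrite mulr_sumr big_distrr.
under [LHS]eq_bigr => a _ do rewrite exchange_big.
under [LHS]eq_bigr => a _ do under eq_bigr => r _ do rewrite exchange_big.
rewrite exchange_big; apply: eq_bigr => r _; rewrite exchange_big; apply: eq_bigr => t _.
rewrite /hankel_factor big_distrl /=; apply: eq_bigr => a _.
by rewrite big_distrr /=; apply: eq_bigr => b _; ring.
Qed.

Definition hankel_pivot m : 'I_n.*2.+1 * 'I_n.*2.+1 := (inord (n + m), inord n).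

Lemma hankel_factor_upper i m : (i < m)%N -> (m <= n)%N ->
  hankel_factor i (hankel_pivot m) = 0.
Proof.
move=> lt_im le_mn; rewrite /hankel_factor big1_seq // => a.
rewrite mem_index_iota => /andP [_ lt_ai] /=.
rewrite !inordK ?coef_cbpoly ?ifF; try lia.
by rewrite (@bin_small a.*2) ?mul0r ?mulr0 //; lia.
Qed.

Lemma hankel_factor_diag m : (m <= n)%N -> hankel_factor m (hankel_pivot m) = 1.
Proof.
move=> le_mn; rewrite /hankel_factor big_nat_recr //= big1_seq ?add0r => [|a].
  rewrite binn subnn /= !inordK ?coef_cbpoly ?ifF; try lia.
  have -> : (n + m - (n - m) = m.*2)%N by lia.
  by rewrite subn0 subnn !binn !mul1r.
rewrite mem_index_iota => /andP [_ lt_am] /=.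
rewrite !inordK ?coef_cbpoly ?ifF; try lia.
by rewrite (@bin_small a.*2) ?mul0r ?mulr0 //; lia.
Qed.

End HankelGram.

Lemma hankelD1_posdef (R : realDomainType) n (v : 'rV[R]_n.+1) :
  v != 0 -> 0 < (v *m map_mx intr (hankelD1 n) *m v^T) 0 0.
Proof.
have -> : map_mx intr (hankelD1 n) =
    \matrix_(i, j) \sum_p hankel_factor R n i p * hankel_factor R n j p.
  apply/matrixP => i j; rewrite !mxE -[_%:~R]/((D1 (i + j))%:R).
  by rewrite (hankelD1_gram R n) // -ltnS.
apply: (@gram_posdef _ _ _ (hankel_factor R n) (hankel_pivot n)) => [i m lt_im | m].
  by rewrite hankel_factor_upper // -ltnS.
by rewrite hankel_factor_diag ?oner_neq0 // -ltnS.
Qed.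

Lemma hankelD1_det_gt0 n : 0 < \det (hankelD1 n).
Proof.
by rewrite -(ltr0z realalg) -det_map_mx posdef_det_gt0 // => v; apply: hankelD1_posdef.
Qed.

(** * Parity of the determinant *)

Definition hscale (i : nat) : nat := if i is 0 then 1 else 2.

Definition hankel_core n : 'M[int]_n.+1 :=
  \matrix_(i, j) Posz (D1 (i + j) %/ (hscale i * hscale j)).

Lemma hscale_dvd_D1 i j : (hscale i * hscale j %| D1 (i + j))%N.
Proof.
case: i j => [|i] [|j] //=; rewrite ?addn0 ?addSn D1S //; last exact: dvdn_mulr.
  by apply/dvdnP; exists (2 * (hcbin j + D1_mid j))%N; lia.
by apply/dvdnP; exists (2 * (hcbin i + D1_mid i))%N; lia.
Qed.

Lemma det_hankelD1 n : \det (hankelD1 n) = 4 ^+ n * \det (hankel_core n).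
Proof.
pose S : 'M[int]_n.+1 := diag_mx (\row_i (hscale i)%:Z).
have -> : hankelD1 n = S *m hankel_core n *m S.
  rewrite mul_diag_mx mul_mx_diag; apply/matrixP => i j; rewrite !mxE -!PoszM.
  by rewrite mulnAC mulnC divnK // hscale_dvd_D1.
have detS : \det S = 2 ^+ n.
  rewrite det_diag big_ord_recl mxE mul1r.
  by under eq_bigr do rewrite mxE; rewrite /hscale /= prodr_const card_ord.
by rewrite !det_mulmx detS mulrAC -exprMn.
Qed.

Definition ballot_ext (i k : nat) : nat :=
  if i is i'.+1 then (if k is k'.+1 then ballot i' k' else 0) else k == 0.

Definition ballot_mx n : 'M[int]_n.+1 := \matrix_(i, k) (ballot_ext i k)%:Z.

Lemma det_ballot_mx n : \det (ballot_mx n) = 1.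
Proof.
rewrite det_trig; last first.
  apply/is_trig_mxP => -[[|i] lt_in] [[|k] lt_kn] //= lt_ik;
  by rewrite mxE //= ballot_small.
by rewrite big1 // => -[[|i] lt_in] _; rewrite mxE //= ballot_diag.
Qed.

Lemma sum_ballot_ext n i j : (i <= n)%N -> (j <= n)%N ->
  (\sum_(k < n.+1) ballot_ext i k * ballot_ext j k)%N =
  if i is i'.+1 then (if j is j'.+1 then ballot (i' + j') 0 else 0) else j == 0.
Proof.
move=> le_in le_jn; rewrite big_ord_recl /=.
under eq_bigr do rewrite /bump /=.
case: i j le_in le_jn => [|i] [|j] le_in le_jn /=.
- by rewrite big1.
- by rewrite big1.
- by rewrite big1 // => k _; rewrite muln0.
rewrite add0n -(big_mkord xpredT (fun k => ballot i k * ballot j k)).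
by rewrite sum_ballot_mul //; lia.
Qed.

Lemma odd_hankel_core n (i j : 'I_n.+1) :
  odd (D1 (i + j) %/ (hscale i * hscale j)) =
  odd (\sum_(k < n.+1) ballot_ext i k * ballot_ext j k).
Proof.
rewrite sum_ballot_ext; [|by rewrite -ltnS..].
case: i j => -[|i] lt_in [[|j] lt_jn] /=; rewrite ?addn0 ?add0n ?addSn.
- by rewrite /D1 big_nat1.
- by rewrite D1S -[4%N]/(2 * 2)%N -mulnA mulKn // oddM.
- by rewrite D1S -[4%N]/(2 * 2)%N -mulnA mulKn // oddM.
by rewrite D1S mulKn // odd_D1S_quarter addnS odd_hcb_ballot.
Qed.

Lemma natr_F2 (a : nat) : (a%:R : 'F_2) = (odd a)%:R.
Proof. by rewrite -(@Fp_nat_mod 2) // modn2. Qed.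

Lemma det_hankel_core_F2 n : ((\det (hankel_core n))%:~R : 'F_2) = 1.
Proof.
have core_F2 : map_mx intr (hankel_core n) =
    map_mx (intr : int -> 'F_2) (ballot_mx n) *m (map_mx intr (ballot_mx n))^T.
  apply/matrixP => i j; rewrite !mxE.
  under eq_bigr do rewrite !mxE.
  rewrite -[_%:~R]/(_%:R) natr_F2 odd_hankel_core -natr_F2 natr_sum.
  by apply: eq_bigr => k _; rewrite natrM.
by rewrite -det_map_mx core_F2 det_mulmx det_tr det_map_mx det_ballot_mx mulr1.
Qed.

Theorem mainTheorem9 (n : nat) :
  exists m : nat, \det (hankelD1 n) = (4 ^+ n * m%:Z) /\ (0 < m)%N /\ odd m.
Proof.
have core_gt0 : 0 < \det (hankel_core n).
  by have := hankelD1_det_gt0 n; rewrite det_hankelD1 pmulr_rgt0 // exprn_gt0.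
case core_eq: (\det (hankel_core n)) core_gt0 => [m|//] m_gt0.
exists m; split; first by rewrite det_hankelD1 core_eq.
split; first by rewrite -ltz_nat.
have := det_hankel_core_F2 n; rewrite core_eq -[_%:~R]/(m%:R) natr_F2.
by case: (odd m) => //= /eqP; rewrite eq_sym oner_eq0.
Qed.
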